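(* Let $A$ be a Lie conformal algebra and $M$ an $A$-module with a commutative associative product such that $\partial^M$ and all $a_\lambda$ act by derivations. For every $\xi\in\tilde\Gamma_1(A,M)$, the contraction $\iota_\xi$ is an odd derivation of degree $-1$ of the superalgebra $(\tilde\Gamma^\bullet(A,M),\wedge)$: $\iota_\xi(\tilde\alpha\wedge\tilde\beta)=\iota_\xi(\tilde\alpha)\wedge\tilde\beta+(-1)^h\tilde\alpha\wedge\iota_\xi(\tilde\beta)$ for $\tilde\alpha\in\tilde\Gamma^h$, $\tilde\beta\in\tilde\Gamma^k$.
   Context: $\mathbb F$ field of characteristic 0. $\tilde\Gamma^k$: $\mathbb F$-linear $\tilde\gamma:A^{\otimes k}\to\mathbb F[\lambda_1..\lambda_k]\otimes M$ with $\tilde\gamma(..,\partial a_i,..)=-\lambda_i\tilde\gamma(..)$ and skew-symmetric under simultaneous permutation of $a_i$ and $\lambda_i$ ($\tilde\Gamma^0=M$). Exterior product: $(\tilde\alpha\wedge\tilde\beta)_{\lambda_1..\lambda_{h+k}}(a_1..a_{h+k})=\sum_{\sigma\in S_{h+k}}\frac{\mathrm{sign}\sigma}{h!k!}\tilde\alpha_{\lambda_{\sigma(1)}..\lambda_{\sigma(h)}}(a_{\sigma(1)}..a_{\sigma(h)})\tilde\beta_{\lambda_{\sigma(h+1)}..\lambda_{\sigma(h+k)}}(a_{\sigma(h+1)}..a_{\sigma(h+k)})$. $\tilde\Gamma_1$: quotient of $A\otimes\mathrm{Hom}_{\mathbb F}(\mathbb F[\lambda],M)$ by $\partial a\otimes\phi=-a\otimes\lambda^*\phi$,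 $(\lambda^*\phi)(f)=\phi(\lambda f)$. For $\xi$ represented by $a_1\otimes\phi$: $(\iota_\xi\tilde\gamma)_{\lambda_2..\lambda_k}(a_2..a_k)=\phi^\mu(\tilde\gamma_{\lambda_1,..,\lambda_k}(a_1,..,a_k))$, where $\phi^\mu(f(\lambda_1)\otimes m)=\phi(f)m$ coefficientwise in $\lambda_2,..,\lambda_k$; $\iota_\xi=0$ on $\tilde\Gamma^0$. *)

From HB Require Import structures.
From mathcomp Require Import all_boot all_order all_algebra all_fingroup.
From mathcomp Require Import finmap.
From mathcomp.multinomials Require Import monalg.

Set Implicit Arguments.
Unset Strict Implicit.
Unset Printing Implicit Defensive.

Import GRing.Theory.
Local Open Scope ring_scope.

(* Conventions.
   * For an F-vector space V, F[lambda] (x) V is {malg V[nat]}: the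
     coefficient of lambda^n is p@_n.
   * F[lambda_1..lambda_k] (x) V is {malg V[{ffun 'I_k -> nat}]}: the key
     e : 'I_k -> nat is the exponent vector of the monomial
     lambda_1^(e 0) ... lambda_k^(e (k-1)).
   * A^k is {ffun 'I_k -> A}; a map A^{(x) k} -> ... is F-linear iff the
     corresponding function on k-tuples is F-linear in each slot. *)

Section Defs.
Variables (F : fieldType) (A M : lmodType F).

(* br a b = [a_lambda b] in F[lambda] (x) A; dA = partial *)
Definition is_LCA (dA : {linear A -> A}) (br : A -> A -> {malg A[nat]}) :=
  (
   (forall c a a' b n, (br (c *: a + a') b)@_n = c *: (br a b)@_n + (br a' b)@_n) /\
   (forall c a b b' n, (br a (c *: b + b'))@_n = c *: (br a b)@_n + (br a b')@_n)) /\
  [/\ (* [d a _lambda b] = - lambda [a_lambda b] *)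
      (forall a b n, (br (dA a) b)@_n = if n is n'.+1 then - (br a b)@_n' else 0),
      (* [a_lambda d b] = (d + lambda) [a_lambda b] *)
      (forall a b n, (br a (dA b))@_n =
                     dA ((br a b)@_n) + (if n is n'.+1 then (br a b)@_n' else 0)),
      (* skew-symmetry  [b_lambda a] = - [a_{-lambda-d} b] *)
      (forall a b n, (br b a)@_n =
          - \sum_(m <- msupp (br a b))
              (((-1) ^+ m * ('C(m, n))%:R) *: iter (m - n) dA ((br a b)@_m))) &
      (* Jacobi [a_l [b_m c]] = [[a_l b]_{l+m} c] + [b_m [a_l c]],
         coefficient of lambda^p mu^q *)
      (forall a b c p q, (br a ((br b c)@_q))@_p =
          \sum_(i < p.+1) (br ((br a b)@_(p - i)) c)@_(q + i) *+ 'C(q + i, i)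
          + (br b ((br a c)@_p))@_q)].

(* act a m = a_lambda m in F[lambda] (x) M ; dM = partial^M *)
Definition is_LCA_module (dA : {linear A -> A}) (br : A -> A -> {malg A[nat]})
    (dM : {linear M -> M}) (act : A -> M -> {malg M[nat]}) :=
  [/\ (forall c a a' m n, (act (c *: a + a') m)@_n = c *: (act a m)@_n + (act a' m)@_n),
      (forall c a m m' n, (act a (c *: m + m'))@_n = c *: (act a m)@_n + (act a m')@_n),
      (* (d a)_lambda m = - lambda a_lambda m *)
      (forall a m n, (act (dA a) m)@_n = if n is n'.+1 then - (act a m)@_n' else 0),
      (* a_lambda (d m) = (d + lambda) a_lambda m *)
      (forall a m n, (act a (dM m))@_n =
                     dM ((act a m)@_n) + (if n is n'.+1 then (act a m)@_n' else 0)) &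
      (* a_l (b_m v) - b_m (a_l v) = [a_l b]_{l+m} v, coefficient of l^p m^q *)
      (forall a b v p q, (act a ((act b v)@_q))@_p - (act b ((act a v)@_p))@_q =
          \sum_(i < p.+1) (act ((br a b)@_(p - i)) v)@_(q + i) *+ 'C(q + i, i))].

Definition is_deriv_product (dM : {linear M -> M}) (act : A -> M -> {malg M[nat]})
    (mulM : M -> M -> M) :=
  ((forall c x x' y, mulM (c *: x + x') y = c *: mulM x y + mulM x' y) /\
   (forall c x y y', mulM x (c *: y + y') = c *: mulM x y + mulM x y')) /\
  [/\
      (forall x y z, mulM x (mulM y z) = mulM (mulM x y) z),
      (forall x y, mulM x y = mulM y x),
      (forall x y, dM (mulM x y) = mulM (dM x) y + mulM x (dM y)) &
      (forall a x y n, (act a (mulM x y))@_n = mulM ((act a x)@_n) y + mulM x ((act a y)@_n))].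

Definition cochain (k : nat) := {ffun 'I_k -> A} -> {malg M[{ffun 'I_k -> nat}]}.

Definition upd k (a : {ffun 'I_k -> A}) (i : 'I_k) (x : A) : {ffun 'I_k -> A} :=
  [ffun j => if j == i then x else a j].

Definition is_cochain (dA : {linear A -> A}) k (g : cochain k) :=
  [/\
      (forall a i c x y (e : {ffun 'I_k -> nat}), (g (upd a i (c *: x + y)))@_e =
                           c *: (g (upd a i x))@_e + (g (upd a i y))@_e),
      (* g(.., d a_i, ..) = - lambda_i g(..) *)
      (forall a i (e : {ffun 'I_k -> nat}), (g (upd a i (dA (a i))))@_e =
          if e i is n.+1 then - (g a)@_[ffun j => if j == i then n else e j] else 0) &
      (forall (s : 'S_k) (a : {ffun 'I_k -> A}) (e : {ffun 'I_k -> nat}),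
          (g [ffun i => a (s i)])@_[ffun i => e (s i)] = (-1) ^+ odd_perm s *: (g a)@_e)].

(* exponent vector of lambda_{s(1)}^{d1 1}..lambda_{s(h)}^{d1 h}
                      lambda_{s(h+1)}^{d2 1}..lambda_{s(h+k)}^{d2 k} *)
Definition comb h k (s : 'S_(h + k)) (d1 : {ffun 'I_h -> nat}) (d2 : {ffun 'I_k -> nat})
  : {ffun 'I_(h + k) -> nat} :=
  [ffun x => match split ((s^-1)%g x) with inl i => d1 i | inr j => d2 j end].

Definition wedge (mulM : M -> M -> M) h k (al : cochain h) (be : cochain k)
  : cochain (h + k) := fun a =>
  \sum_(s : 'S_(h + k))
    \sum_(d1 <- msupp (al [ffun i => a (s (lshift k i))]))
    \sum_(d2 <- msupp (be [ffun j => a (s (rshift h j))]))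
      << ((-1) ^+ odd_perm s / ((h`!)%:R * (k`!)%:R)) *:
           mulM (al [ffun i => a (s (lshift k i))])@_d1
                (be [ffun j => a (s (rshift h j))])@_d2 *g comb s d1 d2 >>.

(* an element xi of tilde Gamma_1 is represented by a finite sum
   sum_j a_j (x) phi_j, i.e. by a list of pairs (a_j, phi_j) *)
Definition gamma1_rep := seq (A * {linear {poly F} -> M}).

Definition cons_arg k (x : A) (a : {ffun 'I_k -> A}) : {ffun 'I_k.+1 -> A} :=
  [ffun i => if unlift ord0 i is Some j then a j else x].

Definition tail_exp k (d : {ffun 'I_k.+1 -> nat}) : {ffun 'I_k -> nat} :=
  [ffun j => d (lift ord0 j)].

(* iota_{a_1 (x) phi} on tilde Gamma^{k+1}:
   phi^mu (f(lambda_1) (x) m) = phi(f) m, coefficientwise in lambda_2..lambda_k *)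
Definition iotaS (mulM : M -> M -> M) (xi : gamma1_rep) k (g : cochain k.+1)
  : cochain k := fun a =>
  \sum_(p <- xi) \sum_(d <- msupp (g (cons_arg p.1 a)))
     << mulM (p.2 'X^(d ord0)) (g (cons_arg p.1 a))@_d *g tail_exp d >>.

Definition contr (mulM : M -> M -> M) (xi : gamma1_rep) k : cochain k -> cochain k.-1 :=
  match k return cochain k -> cochain k.-1 with
  | 0 => fun _ _ => 0
  | k'.+1 => @iotaS mulM xi k'
  end.

(* component of a homogeneous element of tilde Gamma^bullet = (+)_n tilde Gamma^n,
   evaluated on a_1..a_r and read at the monomial lambda^e (e of length r);
   zero if the degree n differs from r.  Used to compare homogeneous elements
   living in (possibly non-convertible) degrees. *)
Definition gcomp n (g : cochain n) (a : seq A) (e : seq nat) : M :=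
  if (size a == n) && (size e == n) then
    (g [ffun i : 'I_n => nth 0 a i])@_[ffun i : 'I_n => nth 0%N e i]
  else 0.

End Defs.

From HB Require Import structures.
From mathcomp Require Import all_boot all_order all_algebra all_fingroup.
From mathcomp Require Import finmap.
From mathcomp.multinomials Require Import monalg.
From mathcomp Require Import ring.

Set Implicit Arguments.
Unset Strict Implicit.
Unset Printing Implicit Defensive.
Import GRing.Theory.
Local Open Scope ring_scope.

(* Both sides are compared coefficientwise, on arguments a_1..a_n and exponents e.
   Contracting a cochain g against a (x) phi gives the sum over j < B of
   phi(lambda^j) times the coefficient of g at (a, a_1..a_n; j, e), where B bounds
   the exponents occurring on the finitely many arguments involved.
   In the coefficient of al /\ be at (a, a_1..a_n), split the permutations s
   according to whether the slot of a goes to al or to be.  In the first class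
   s = lift_perm i 0 t with i < h: skew-symmetry of al moves that slot to the
   front with a sign cancelling the sign of s, and the h choices of i turn h! into
   (h-1)! (characteristic 0).  The second class is symmetric, except that the slot
   passes the h arguments of al, whence (-1)^h.  Bilinearity, associativity and
   commutativity of the product then move phi(lambda^j) onto the factor of al,
   resp. be. *)

Lemma sum_pred1_seq (V : zmodType) (T : eqType) (r : seq T) (y : T) (f : T -> V) :
  uniq r -> \sum_(x <- r) f x *+ (x == y) = if y \in r then f y else 0.
Proof.
elim: r => [|x r IH] /=; first by rewrite big_nil.
case/andP=> xr ur; rewrite big_cons IH // inE.
case: (eqVneq x y) => [<-|ne]; first by rewrite mulr1n (negbTE xr) addr0.
by rewrite mulr0n add0r.
Qed.

Lemma comb_eq h k (s : 'S_(h + k)) d1 d2 (d : {ffun 'I_(h + k) -> nat}) :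
  (comb s d1 d2 == d) = (d1 == [ffun i => d (s (lshift k i))]) &&
                         (d2 == [ffun j => d (s (rshift h j))]).
Proof.
apply/eqP/andP => [<-|[/eqP-> /eqP->]].
  by split; apply/eqP/ffunP => i; rewrite !ffunE permK ?(unsplitK (inl _), unsplitK (inr _)).
apply/ffunP => x; rewrite !ffunE.
case: splitP => j Ej; rewrite ffunE;
  [have -> : lshift k j = (s^-1)%g x | have -> : rshift h j = (s^-1)%g x];
  rewrite ?permKV //; exact/val_inj.
Qed.

Definition cons_exp k (j : nat) (d : {ffun 'I_k -> nat}) : {ffun 'I_k.+1 -> nat} :=
  [ffun i => if unlift ord0 i is Some q then d q else j].

Lemma cons_exp0 k j (d : {ffun 'I_k -> nat}) : cons_exp j d ord0 = j.
Proof. by rewrite ffunE unlift_none. Qed.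

Lemma tail_cons_exp k j (d : {ffun 'I_k -> nat}) : tail_exp (cons_exp j d) = d.
Proof. by apply/ffunP => q; rewrite !ffunE liftK. Qed.

Lemma cons_exp_tail k (d : {ffun 'I_k.+1 -> nat}) : cons_exp (d ord0) (tail_exp d) = d.
Proof. by apply/ffunP => i; rewrite ffunE; case: unliftP => [q|] ->; rewrite ?ffunE. Qed.

Lemma cons_exp_eq k j (d : {ffun 'I_k -> nat}) d' :
  (d' == cons_exp j d) = (j == d' ord0) && (tail_exp d' == d).
Proof.
apply/eqP/andP => [->|[/eqP-> /eqP<-]]; last by rewrite cons_exp_tail.
by rewrite cons_exp0 tail_cons_exp.
Qed.

Lemma cons_arg_nth (F : fieldType) (A : lmodType F) n (x : A) (a : seq A) :
  cons_arg x [ffun i : 'I_n => nth 0 a i] = [ffun i : 'I_n.+1 => nth 0 (x :: a) i].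
Proof. by apply/ffunP => i; rewrite !ffunE; case: unliftP => [q|] -> //=; rewrite ffunE. Qed.

Lemma cons_exp_nth n j (e : seq nat) :
  cons_exp j [ffun i : 'I_n => nth 0%N e i] = [ffun i : 'I_n.+1 => nth 0%N (j :: e) i].
Proof. by apply/ffunP => i; rewrite !ffunE; case: unliftP => [q|] -> //=; rewrite ffunE. Qed.

Lemma sum_lift_perm (V : zmodType) n (i0 j0 : 'I_n.+1) (f : 'S_n.+1 -> V) :
  \sum_(s : 'S_n.+1 | s i0 == j0) f s = \sum_(t : 'S_n) f (lift_perm i0 j0 t).
Proof.
pose drop (s : 'S_n.+1) (k : 'I_n) := odflt k (unlift (s i0) (s (lift i0 k))).
have dropK (s : 'S_n.+1) k : lift (s i0) (drop s k) = s (lift i0 k).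
  rewrite /drop; case: unliftP => [k' -> // | /perm_inj/eqP].
  by rewrite eq_sym (negbTE (neq_lift i0 k)).
have drop_inj (s : 'S_n.+1) : injective (drop s).
  by move=> k1 k2 /(congr1 (lift (s i0))); rewrite !dropK => /perm_inj/lift_inj.
rewrite (reindex (lift_perm i0 j0)) /=; last first.
  exists (fun s => perm (drop_inj s)) => [t _ | s /eqP si0]; apply/permP => k.
    apply: (@lift_inj _ (lift_perm i0 j0 t i0)).
    by rewrite [perm _ k]permE dropK lift_perm_id lift_perm_lift.
  case: (unliftP i0 k) => [k' ->|->]; last by rewrite lift_perm_id si0.
  by rewrite lift_perm_lift [perm _ k']permE -si0 dropK.
by apply: eq_bigl => t; rewrite lift_perm_id eqxx.
Qed.

Lemma sum_perm_by_preimage0 (V : zmodType) N m (E : N = m.+1) (Q : pred nat)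
    (f : 'S_N -> V) (z : 'I_N) :
  val z = 0%N ->
  \sum_(s : 'S_N | Q (val ((s^-1)%g z))) f s =
  \sum_(i < m.+1 | Q i) \sum_(t : 'S_m) f (cast_perm (esym E) (lift_perm i ord0 t)).
Proof.
subst N => z0; have -> : z = ord0 by apply/val_inj.
rewrite (partition_big (fun s : 'S_m.+1 => (s^-1)%g ord0) (fun i : 'I_m.+1 => Q i)) //.
apply: eq_bigr => i Qi; under [RHS]eq_bigr do rewrite cast_perm_id.
rewrite -sum_lift_perm; apply: eq_bigl => s.
have -> : (s i == ord0) = ((s^-1)%g ord0 == i).
  by apply/eqP/eqP => [<-|<-]; rewrite ?permK ?permKV.
by case: (eqVneq (s^-1%g ord0) i) => [->|]; rewrite ?Qi ?andbF.
Qed.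

Lemma odd_cast_perm m n (E : m = n) (s : 'S_m) : odd_perm (cast_perm E s) = odd_perm s.
Proof. by subst n; rewrite cast_perm_id. Qed.

Definition first_slot_left h k (s : 'S_(h + k)) :=
  [exists i : 'I_h, val (s (lshift k i)) == 0%N].

Lemma first_slot_leftE h k (s : 'S_(h + k)) (z : 'I_(h + k)) :
  val z = 0%N -> first_slot_left s = (val ((s^-1)%g z) < h)%N.
Proof.
move=> z0; apply/existsP/idP => [[i /eqP si0] | lt_h].
  have -> : z = s (lshift k i) by apply: val_inj; rewrite si0 z0.
  by rewrite permK /=.
exists (Ordinal lt_h); apply/eqP; rewrite -z0; congr val.
by rewrite (_ : lshift k _ = (s^-1)%g z) ?permKV //; apply: val_inj.
Qed.

Lemma lift_perm_lshift h' k (i : 'I_(h' + k).+1) (lt_ih : (i < h'.+1)%N)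
    (t : 'S_(h' + k)) (q : 'I_h'.+1) :
  lift_perm i ord0 t (lshift k q : 'I_(h' + k).+1) =
  if unlift ord0 (lift_perm (Ordinal lt_ih) ord0 1 q) is Some w
  then lift ord0 (t (lshift k w)) else ord0.
Proof.
case: (unliftP (Ordinal lt_ih) q) => [q'|] ->.
  have -> : (lshift k (lift (Ordinal lt_ih) q') : 'I_(h' + k).+1) = lift i (lshift k q').
    exact/val_inj.
  by rewrite !lift_perm_lift perm1 liftK.
have -> : (lshift k (Ordinal lt_ih) : 'I_(h' + k).+1) = i by apply/val_inj.
by rewrite !lift_perm_id unlift_none.
Qed.

Lemma lift_perm_rshift h' k (i : 'I_(h' + k).+1) (lt_ih : (i < h'.+1)%N)
    (t : 'S_(h' + k)) (q : 'I_k) :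
  lift_perm i ord0 t (rshift h'.+1 q : 'I_(h' + k).+1) = lift ord0 (t (rshift h' q)).
Proof.
rewrite -(lift_perm_lift i); congr (lift_perm _ _ _ _); apply/val_inj.
by rewrite /= /bump (leq_trans _ (leq_addr q h')).
Qed.

Lemma lift_perm_cast_lshift h k' (E : h + k'.+1 = (h + k').+1) (i : 'I_(h + k').+1)
    (le_hi : (h <= i)%N) (t : 'S_(h + k')) (q : 'I_h) :
  lift_perm i ord0 t (cast_ord E (lshift k'.+1 q)) = lift ord0 (t (lshift k' q)).
Proof.
rewrite -(lift_perm_lift i); congr (lift_perm _ _ _ _); apply/val_inj.
by rewrite /= /bump leqNgt (leq_trans (ltn_ord q) le_hi).
Qed.

Lemma lift_perm_cast_rshift h k' (E : h + k'.+1 = (h + k').+1) (i : 'I_(h + k').+1)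
    (le_hi : (h <= i)%N) (lt_ihk : (i - h < k'.+1)%N) (t : 'S_(h + k')) (q : 'I_k'.+1) :
  lift_perm i ord0 t (cast_ord E (rshift h q)) =
  if unlift ord0 (lift_perm (Ordinal lt_ihk) ord0 1 q) is Some w
  then lift ord0 (t (rshift h w)) else ord0.
Proof.
case: (unliftP (Ordinal lt_ihk) q) => [q'|] ->.
  have -> : cast_ord E (rshift h (lift (Ordinal lt_ihk) q')) = lift i (rshift h q').
    by apply/val_inj; rewrite /= -bumpDl subnKC.
  by rewrite !lift_perm_lift perm1 liftK.
have -> : cast_ord E (rshift h (Ordinal lt_ihk)) = i by apply/val_inj; rewrite /= subnKC.
by rewrite !lift_perm_id unlift_none.
Qed.

Lemma sumr_const_ord_lt (V : zmodType) n h (x : V) : (h <= n)%N ->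
  \sum_(i < n | (i < h)%N) x = x *+ h.
Proof. by move=> le_hn; rewrite -(big_ord_widen n (fun _ => x) le_hn) sumr_const card_ord. Qed.

Lemma sumr_const_ord_ge (V : zmodType) n h (x : V) : (h <= n)%N ->
  \sum_(i < n | (h <= i)%N) x = x *+ (n - h).
Proof.
move=> le_hn.
have split_h : \sum_(i < n) x = \sum_(i < n | (i < h)%N) x + \sum_(i < n | ~~ (i < h)%N) x.
  exact: bigID.
rewrite sumr_const card_ord sumr_const_ord_lt // in split_h.
under eq_bigl do rewrite leqNgt.
by apply: (@addrI _ (x *+ h)); rewrite -split_h -mulrnDr subnKC.
Qed.

Lemma signr_addb_div (R : comUnitRingType) (b b' t : bool) (c : R) :
  (-1) ^+ (b (+) t) / c * (-1) ^+ b' = (-1) ^+ (b (+) b') * ((-1) ^+ t / c).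
Proof. by case: b; case: b'; case: t; rewrite /= ?expr0 ?expr1; ring. Qed.

Lemma mulrn_div_factS (R : fieldType) n (x c : R) : n.+1%:R != 0 :> R ->
  x / ((n.+1)`!%:R * c) *+ n.+1 = x / (n`!%:R * c).
Proof.
move=> n1_neq0; rewrite factS natrM -mulrA invfM -mulr_natr mulrAC -!mulrA.
by rewrite mulVKf.
Qed.

Section Contraction.
Variables (F : fieldType) (A M : lmodType F) (mulM : M -> M -> M).
Hypothesis mulMl : forall c x x' y, mulM (c *: x + x') y = c *: mulM x y + mulM x' y.
Hypothesis mulMr : forall c x y y', mulM x (c *: y + y') = c *: mulM x y + mulM x y'.
Hypothesis mulMA : forall x y z, mulM x (mulM y z) = mulM (mulM x y) z.
Hypothesis mulMC : forall x y, mulM x y = mulM y x.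
Hypothesis char0 : [pchar F] =i pred0.
Variable dA : {linear A -> A}.

Lemma mulM0l y : mulM 0 y = 0.
Proof.
have := mulMl 1 0 0 y; rewrite scaler0 addr0 scale1r => E.
by apply: (@addrI _ (mulM 0 y)); rewrite addr0 -E.
Qed.

Lemma mulM0r x : mulM x 0 = 0.
Proof.
have := mulMr 1 x 0 0; rewrite scaler0 addr0 scale1r => E.
by apply: (@addrI _ (mulM x 0)); rewrite addr0 -E.
Qed.

Lemma mulMDl x x' y : mulM (x + x') y = mulM x y + mulM x' y.
Proof. by rewrite -[x]scale1r mulMl !scale1r. Qed.

Lemma mulMDr x y y' : mulM x (y + y') = mulM x y + mulM x y'.
Proof. by rewrite -[y]scale1r mulMr !scale1r. Qed.

Lemma mulMZl c x y : mulM (c *: x) y = c *: mulM x y.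
Proof. by rewrite -[c *: x]addr0 mulMl mulM0l addr0. Qed.

Lemma mulMZr c x y : mulM x (c *: y) = c *: mulM x y.
Proof. by rewrite -[c *: y]addr0 mulMr mulM0r addr0. Qed.

Lemma mulM_suml I (r : seq I) (P : pred I) (f : I -> M) y :
  mulM (\sum_(i <- r | P i) f i) y = \sum_(i <- r | P i) mulM (f i) y.
Proof. by elim/big_rec2: _ => [|i u v _ <-]; rewrite ?mulM0l ?mulMDl. Qed.

Lemma mulM_sumr I (r : seq I) (P : pred I) (f : I -> M) x :
  mulM x (\sum_(i <- r | P i) f i) = \sum_(i <- r | P i) mulM x (f i).
Proof. by elim/big_rec2: _ => [|i u v _ <-]; rewrite ?mulM0r ?mulMDr. Qed.

Definition wedge_term h k (al : cochain A M h) (be : cochain A M k)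
  (b : {ffun 'I_(h + k) -> A}) (d : {ffun 'I_(h + k) -> nat}) (s : 'S_(h + k)) : M :=
  ((-1) ^+ odd_perm s / ((h`!)%:R * (k`!)%:R)) *:
   mulM (al [ffun i => b (s (lshift k i))])@_[ffun i => d (s (lshift k i))]
        (be [ffun j => b (s (rshift h j))])@_[ffun j => d (s (rshift h j))].

Lemma mcoeff_wedge h k (al : cochain A M h) (be : cochain A M k) b d :
  (wedge mulM al be b)@_d = \sum_(s : 'S_(h + k)) wedge_term al be b d s.
Proof.
rewrite /wedge raddf_sum; apply: eq_bigr => s _; rewrite raddf_sum.
set c := _ / _; set P1 := al _; set P2 := be _.
set D1 := [ffun i => d (s (lshift k i))]; set D2 := [ffun j => d (s (rshift h j))].
have collapse2 d1 : \sum_(d2 <- msupp P2) c *: mulM P1@_d1 P2@_d2 *+ (d2 == D2)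
                    = c *: mulM P1@_d1 P2@_D2.
  rewrite sum_pred1_seq ?fset_uniq //; case: ifP => // /negbT P2D2.
  by rewrite (mcoeff_outdom P2D2) mulM0r scaler0.
transitivity (\sum_(d1 <- msupp P1) (c *: mulM P1@_d1 P2@_D2) *+ (d1 == D1)).
  apply: eq_bigr => d1 _; rewrite raddf_sum -collapse2 -sumrMnl.
  by apply: eq_bigr => d2 _; rewrite /= mcoeffU comb_eq -mulnb mulnC mulrnA.
rewrite sum_pred1_seq ?fset_uniq //; case: ifP => // /negbT P1D1.
by rewrite /wedge_term (mcoeff_outdom P1D1) mulM0l scaler0.
Qed.

Lemma mcoeff_iota_summand k (G : {malg M[{ffun 'I_k.+1 -> nat}]}) (phi : {poly F} -> M) d B :
  (forall j, (B <= j)%N -> G@_(cons_exp j d) = 0) ->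
  (\sum_(d' <- msupp G) << mulM (phi 'X^(d' ord0)) G@_d' *g tail_exp d' >>)@_d =
  \sum_(j < B) mulM (phi 'X^j) G@_(cons_exp j d).
Proof.
move=> G_van; pose H (d' : {ffun 'I_k.+1 -> nat}) := mulM (phi 'X^(d' ord0)) G@_d'.
have collapse (j : 'I_B) : \sum_(d' <- msupp G) H d' *+ (d' == cons_exp j d) = H (cons_exp j d).
  rewrite sum_pred1_seq ?fset_uniq //; case: ifP => // /negbT Gj.
  by rewrite /H (mcoeff_outdom Gj) mulM0r.
rewrite raddf_sum; under eq_bigr do rewrite /= mcoeffU.
transitivity (\sum_(j < B) H (cons_exp j d)); last by apply: eq_bigr => j _; rewrite /H cons_exp0.
under [RHS]eq_bigr do rewrite -collapse.
rewrite exchange_big /= big_seq [RHS]big_seq; apply: eq_bigr => d' G_d'.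
under eq_bigr do rewrite cons_exp_eq.
case: (eqVneq (tail_exp d') d) => [tail_d'|]; last first.
  by move=> _; rewrite mulr0n big1 // => j _; rewrite andbF mulr0n.
have lt_d'B : (d' ord0 < B)%N.
  rewrite ltnNge; apply/negP => /G_van; rewrite -tail_d' cons_exp_tail.
  by move/eqP; rewrite mcoeff_eq0 G_d'.
rewrite mulr1n (bigD1 (Ordinal lt_d'B)) //= eqxx mulr1n big1 ?addr0 // => j ne_j.
by rewrite andbT; case: eqP => [E|_]; [case/eqP: ne_j; apply: val_inj | rewrite mulr0n].
Qed.

Lemma mcoeff_iotaS (xi : gamma1_rep A M) n (g : cochain A M n.+1) b d B :
  (forall x, x \in [seq p.1 | p <- xi] -> forall j, (B <= j)%N ->
     (g (cons_arg x b))@_(cons_exp j d) = 0) ->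
  (iotaS mulM xi g b)@_d =
  \sum_(p <- xi) \sum_(j < B) mulM (p.2 'X^j) (g (cons_arg p.1 b))@_(cons_exp j d).
Proof.
rewrite /iotaS raddf_sum; elim: xi => [|p xi IH] g_van; first by rewrite !big_nil.
rewrite !big_cons IH => [|x x_xi]; last by apply: g_van; rewrite inE x_xi orbT.
by congr (_ + _); apply: mcoeff_iota_summand => j; apply: g_van (mem_head _ _) j.
Qed.

Lemma gcomp_contr n (g : cochain A M n) (xi : gamma1_rep A M) a e B :
  (forall x, x \in [seq p.1 | p <- xi] -> forall j, (B <= j)%N ->
     gcomp g (x :: a) (j :: e) = 0) ->
  gcomp (contr mulM xi g) a e =
  \sum_(p <- xi) \sum_(j < B) mulM (p.2 'X^j) (gcomp g (p.1 :: a) ((j : nat) :: e)).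
Proof.
case: n g => [|n] g g_van.
  rewrite /gcomp /= big1 ?mcoeff0 => [|p _]; first by case: ifP.
  by rewrite big1 // => j _; rewrite mulM0r.
rewrite /gcomp /= !eqSS; case: ifP => sizes; last first.
  by rewrite big1 // => p _; rewrite big1 // => j _; rewrite mulM0r.
rewrite (mcoeff_iotaS (B := B)) => [|x x_xi j Bj].
  by apply: eq_bigr => p _; apply: eq_bigr => j _; rewrite cons_arg_nth cons_exp_nth.
by have := g_van x x_xi j Bj; rewrite /gcomp /= !eqSS sizes cons_arg_nth cons_exp_nth.
Qed.

Definition deg_bounded n (g : cochain A M n) (L : seq A) (B : nat) :=
  forall (b : {ffun 'I_n -> A}) (d : {ffun 'I_n -> nat}) (i : 'I_n),
    (forall q, b q \in L) -> (B <= d i)%N -> (g b)@_d = 0.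

Lemma deg_bounded_le n (g : cochain A M n) L B B' :
  (B <= B')%N -> deg_bounded g L B -> deg_bounded g L B'.
Proof. by move=> le_BB' gB b d i bL /(leq_trans le_BB'); apply: gB. Qed.

Lemma deg_bounded_exists n (g : cochain A M n) L : exists B, deg_bounded g L B.
Proof.
pose bf (f : {ffun 'I_n -> 'I_(size L)}) := [ffun q => nth 0 L (f q)].
exists (\sum_f \sum_(d <- msupp (g (bf f))) \sum_(i < n) (d i).+1)%N.
move=> b d i bL; apply: contraTeq; rewrite mcoeff_neq0 -ltnNge => g_d.
have idx_lt q : (index (b q) L < size L)%N by rewrite index_mem.
pose f := [ffun q => Ordinal (idx_lt q)].
have bfE : bf f = b by apply/ffunP => q; rewrite !ffunE /= nth_index.
rewrite -bfE in g_d.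
rewrite (bigD1 f) //= (bigD1_seq d g_d (fset_uniq _)) /= (bigD1 i) //= -!addnA.
by rewrite ltnS leq_addr.
Qed.

Lemma deg_bounded_wedge h k (al : cochain A M h) (be : cochain A M k) L B :
  deg_bounded al L B -> deg_bounded be L B -> deg_bounded (wedge mulM al be) L B.
Proof.
move=> alB beB b d z bL Bz; rewrite mcoeff_wedge big1 // => s _.
have sbL c : forall q, [ffun q => b (s (c q))] q \in L by move=> q; rewrite ffunE.
rewrite /wedge_term; case: (splitP ((s^-1)%g z)) => i Ei.
  have sz : s (lshift k i) = z by rewrite (_ : lshift k i = (s^-1)%g z) ?permKV //; apply: val_inj.
  by rewrite (alB _ _ i (sbL _ _)) ?mulM0l ?scaler0 // ffunE sz.
have sz : s (rshift h i) = z by rewrite (_ : rshift h i = (s^-1)%g z) ?permKV //; apply: val_inj.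
by rewrite (beB _ _ i (sbL _ _)) ?mulM0r ?scaler0 // ffunE sz.
Qed.

Lemma deg_bounded_cons n (g : cochain A M n.+1) L B x (b : {ffun 'I_n -> A}) j
    (d : {ffun 'I_n -> nat}) :
  deg_bounded g L B -> x \in L -> (forall q, b q \in L) -> (B <= j)%N ->
  (g (cons_arg x b))@_(cons_exp j d) = 0.
Proof.
move=> gB xL bL Bj; rewrite (gB _ _ ord0) ?cons_exp0 // => q.
by rewrite ffunE; case: unlift.
Qed.

Lemma gcomp_cons_eq0 n (g : cochain A M n) L B x a j e :
  deg_bounded g L B -> x \in L -> (forall q, nth 0 a q \in L) -> (B <= j)%N ->
  gcomp g (x :: a) (j :: e) = 0.
Proof.
case: n g => [|n] g gB xL aL Bj; rewrite /gcomp //= !eqSS; case: ifP => // _.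
by rewrite -cons_arg_nth -cons_exp_nth (deg_bounded_cons _ gB) // => q; rewrite ffunE.
Qed.

Lemma natrS_neq0 n : n.+1%:R != 0 :> F.
Proof. by rewrite (proj1 (pcharf0P F) char0). Qed.

Lemma wedge_term_lift_left h' k (al : cochain A M h'.+1) (be : cochain A M k) x j
    (b : {ffun 'I_(h' + k) -> A}) (d : {ffun 'I_(h' + k) -> nat})
    (i : 'I_(h' + k).+1) (t : 'S_(h' + k)) :
  is_cochain dA al -> (i < h'.+1)%N ->
  wedge_term al be (cons_arg x b) (cons_exp j d) (lift_perm i ord0 t) =
  ((-1) ^+ odd_perm t / ((h'.+1)`!%:R * k`!%:R)) *:
  mulM (al (cons_arg x [ffun q => b (t (lshift k q))]))@_(cons_exp j [ffun q => d (t (lshift k q))])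
       (be [ffun q => b (t (rshift h' q))])@_[ffun q => d (t (rshift h' q))].
Proof.
case=> _ _ al_skew lt_ih; pose c := lift_perm (Ordinal lt_ih) ord0 1.
have argsE : [ffun q : 'I_h'.+1 => cons_arg x b (lift_perm i ord0 t (lshift k q))] =
             [ffun q => cons_arg x [ffun q => b (t (lshift k q))] (c q)].
  apply/ffunP => q; rewrite !ffunE lift_perm_lshift.
  by case: (unlift ord0 (c q)) => [w|]; rewrite ?liftK ?unlift_none ?ffunE.
have expsE : [ffun q : 'I_h'.+1 => cons_exp j d (lift_perm i ord0 t (lshift k q))] =
             [ffun q => cons_exp j [ffun q => d (t (lshift k q))] (c q)].
  apply/ffunP => q; rewrite !ffunE lift_perm_lshift.
  by case: (unlift ord0 (c q)) => [w|]; rewrite ?liftK ?unlift_none ?ffunE.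
have rargsE (T : Type) y (f : {ffun 'I_(h' + k) -> T}) :
    [ffun q : 'I_k => [ffun I : 'I_(h' + k).+1 => if unlift ord0 I is Some w then f w else y]
                 (lift_perm i ord0 t (rshift h'.+1 q))] = [ffun q => f (t (rshift h' q))].
  by apply/ffunP => q; rewrite !ffunE (lift_perm_rshift lt_ih) /= liftK.
rewrite /wedge_term argsE expsE al_skew rargsE rargsE mulMZl scalerA; congr (_ *: _).
by rewrite !odd_lift_perm odd_perm1 /= !addbF signr_addb_div addbb mul1r.
Qed.

(* [h + k'.+1] is not convertible to [(h + k').+1], hence the casts. *)
Lemma wedge_term_lift_right h k' (al : cochain A M h) (be : cochain A M k'.+1) x j
    (b : {ffun 'I_(h + k') -> A}) (d : {ffun 'I_(h + k') -> nat})
    (i : 'I_(h + k').+1) (t : 'S_(h + k')) :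
  is_cochain dA be -> (h <= i)%N ->
  wedge_term al be [ffun q => cons_arg x b (cast_ord (addnS h k') q)]
    [ffun q => cons_exp j d (cast_ord (addnS h k') q)]
    (cast_perm (esym (addnS h k')) (lift_perm i ord0 t)) =
  ((-1) ^+ h * ((-1) ^+ odd_perm t / (h`!%:R * (k'.+1)`!%:R))) *:
  mulM (al [ffun q => b (t (lshift k' q))])@_[ffun q => d (t (lshift k' q))]
       (be (cons_arg x [ffun q => b (t (rshift h q))]))@_(cons_exp j [ffun q => d (t (rshift h q))]).
Proof.
case=> _ _ be_skew le_hi.
have lt_ihk : (i - h < k'.+1)%N by rewrite ltnS leq_subLR -ltnS.
pose c := lift_perm (Ordinal lt_ihk) ord0 1.
have argsE : [ffun q : 'I_k'.+1 => [ffun q => cons_arg x b (cast_ord (addnS h k') q)]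
               (cast_perm (esym (addnS h k')) (lift_perm i ord0 t) (rshift h q))] =
             [ffun q => cons_arg x [ffun q => b (t (rshift h q))] (c q)].
  apply/ffunP => q; rewrite !ffunE cast_permE cast_ordKV (lift_perm_cast_rshift _ le_hi).
  by case: (unlift ord0 (c q)) => [w|] /=; rewrite ?liftK ?unlift_none ?ffunE.
have expsE : [ffun q : 'I_k'.+1 => [ffun q => cons_exp j d (cast_ord (addnS h k') q)]
               (cast_perm (esym (addnS h k')) (lift_perm i ord0 t) (rshift h q))] =
             [ffun q => cons_exp j [ffun q => d (t (rshift h q))] (c q)].
  apply/ffunP => q; rewrite !ffunE cast_permE cast_ordKV (lift_perm_cast_rshift _ le_hi).
  by case: (unlift ord0 (c q)) => [w|] /=; rewrite ?liftK ?unlift_none ?ffunE.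
have largsE (T : Type) y (f : {ffun 'I_(h + k') -> T}) :
    [ffun q : 'I_h => [ffun q => [ffun I : 'I_(h + k').+1 =>
       if unlift ord0 I is Some w then f w else y] (cast_ord (addnS h k') q)]
       (cast_perm (esym (addnS h k')) (lift_perm i ord0 t) (lshift k'.+1 q))] =
    [ffun q => f (t (lshift k' q))].
  apply/ffunP => q; rewrite !ffunE cast_permE cast_ordKV (lift_perm_cast_lshift _ le_hi).
  by rewrite /= liftK.
rewrite /wedge_term argsE expsE be_skew largsE largsE mulMZr scalerA; congr (_ *: _).
rewrite odd_cast_perm !odd_lift_perm odd_perm1 /= !addbF signr_addb_div.
by rewrite -{1}(subnKC le_hi) oddD -addbA addbb addbF signr_odd.
Qed.

Lemma sum_wedge_term_left h' k (al : cochain A M h'.+1) (be : cochain A M k) x j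
    (b : {ffun 'I_(h' + k) -> A}) (d : {ffun 'I_(h' + k) -> nat}) :
  is_cochain dA al ->
  \sum_(s : 'S_(h'.+1 + k) | first_slot_left s)
     wedge_term al be (cons_arg x b) (cons_exp j d) s =
  \sum_(t : 'S_(h' + k)) ((-1) ^+ odd_perm t / (h'`!%:R * k`!%:R)) *:
  mulM (al (cons_arg x [ffun q => b (t (lshift k q))]))@_(cons_exp j [ffun q => d (t (lshift k q))])
       (be [ffun q => b (t (rshift h' q))])@_[ffun q => d (t (rshift h' q))].
Proof.
move=> al_cochain; have z0 : val (ord0 : 'I_(h'.+1 + k)) = 0%N by [].
under eq_bigl do rewrite (first_slot_leftE _ z0).
rewrite (@sum_perm_by_preimage0 _ _ (h' + k) erefl (fun v => v < h'.+1)%N _ _ z0).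
rewrite exchange_big; apply: eq_bigr => t _.
under eq_bigr => i lt_ih do rewrite cast_perm_id (wedge_term_lift_left be x j b d t al_cochain lt_ih).
by rewrite sumr_const_ord_lt ?ltnS ?leq_addr // scalerMnl mulrn_div_factS ?natrS_neq0.
Qed.

Lemma sum_wedge_term_right h k' (al : cochain A M h) (be : cochain A M k'.+1) x j
    (b : {ffun 'I_(h + k') -> A}) (d : {ffun 'I_(h + k') -> nat}) :
  is_cochain dA be ->
  \sum_(s : 'S_(h + k'.+1) | ~~ first_slot_left s)
     wedge_term al be [ffun q => cons_arg x b (cast_ord (addnS h k') q)]
       [ffun q => cons_exp j d (cast_ord (addnS h k') q)] s =
  (-1) ^+ h *: \sum_(t : 'S_(h + k')) ((-1) ^+ odd_perm t / (h`!%:R * k'`!%:R)) *: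
  mulM (al [ffun q => b (t (lshift k' q))])@_[ffun q => d (t (lshift k' q))]
       (be (cons_arg x [ffun q => b (t (rshift h q))]))@_(cons_exp j [ffun q => d (t (rshift h q))]).
Proof.
move=> be_cochain; have z0 : val (cast_ord (esym (addnS h k')) ord0) = 0%N by [].
under eq_bigl do rewrite (first_slot_leftE _ z0) -leqNgt.
rewrite (sum_perm_by_preimage0 (addnS h k') (fun v => h <= v)%N _ z0).
rewrite exchange_big scaler_sumr; apply: eq_bigr => t _.
under eq_bigr => i le_hi do rewrite (wedge_term_lift_right al x j b d t be_cochain le_hi).
rewrite sumr_const_ord_ge ?leqW ?leq_addr // subSn ?leq_addr // addKn.
rewrite scalerMnl scalerA -mulrnAr [h`!%:R * _]mulrC mulrn_div_factS ?natrS_neq0 //.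
by rewrite [_ * h`!%:R]mulrC.
Qed.

Definition wedge_part (left : bool) h k (al : cochain A M h) (be : cochain A M k)
    (a : seq A) (e : seq nat) : M :=
  if (size a == h + k)%N && (size e == h + k)%N then
    \sum_(s : 'S_(h + k) | first_slot_left s == left)
      wedge_term al be [ffun i : 'I_(h + k) => nth 0 a i] [ffun i : 'I_(h + k) => nth 0%N e i] s
  else 0.

Lemma gcomp_wedge_split h k (al : cochain A M h) (be : cochain A M k) a e :
  gcomp (wedge mulM al be) a e = wedge_part true al be a e + wedge_part false al be a e.
Proof.
rewrite /gcomp /wedge_part; case: ifP => _; last by rewrite addr0.
rewrite mcoeff_wedge (bigID (@first_slot_left h k)) /=.
by congr (_ + _); apply: eq_bigl => s; case: first_slot_left.
Qed.

Lemma gcomp_wedge0l h k (al : cochain A M h) (be : cochain A M k) a e :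
  (forall b, al b = 0) -> gcomp (wedge mulM al be) a e = 0.
Proof.
move=> al0; rewrite /gcomp; case: ifP => // _; rewrite mcoeff_wedge big1 // => s _.
by rewrite /wedge_term al0 mcoeff0 mulM0l scaler0.
Qed.

Lemma gcomp_wedge0r h k (al : cochain A M h) (be : cochain A M k) a e :
  (forall b, be b = 0) -> gcomp (wedge mulM al be) a e = 0.
Proof.
move=> be0; rewrite /gcomp; case: ifP => // _; rewrite mcoeff_wedge big1 // => s _.
by rewrite /wedge_term be0 mcoeff0 mulM0r scaler0.
Qed.

Lemma contr_wedge_left h k (al : cochain A M h) (be : cochain A M k) (xi : gamma1_rep A M) a e L B :
  is_cochain dA al -> deg_bounded al L B -> (forall q, nth 0 a q \in L) ->
  {subset [seq p.1 | p <- xi] <= L} ->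
  \sum_(p <- xi) \sum_(j < B) mulM (p.2 'X^j) (wedge_part true al be (p.1 :: a) ((j : nat) :: e)) =
  gcomp (wedge mulM (contr mulM xi al) be) a e.
Proof.
case: h al => [|h'] al al_cochain alB aL xiL.
  rewrite gcomp_wedge0l // big1 // => p _; rewrite big1 // => j _.
  rewrite /wedge_part big_pred0; first by case: ifP => _; rewrite mulM0r.
  by move=> s; rewrite eqb_id; apply/existsP => -[[]].
have sizesS : ((size a).+1 == h'.+1 + k)%N && ((size e).+1 == h'.+1 + k)%N =
              (size a == h' + k)%N && (size e == h' + k)%N by rewrite addSn !eqSS.
rewrite /wedge_part /gcomp /= sizesS; case: ifP => sizes; last first.
  by rewrite big1 // => p _; rewrite big1 // => j _; rewrite mulM0r.
set b := [ffun i : 'I_(h' + k) => nth 0 a i]; set d := [ffun i : 'I_(h' + k) => nth 0%N e i].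
rewrite mcoeff_wedge; transitivity (\sum_(p <- xi) \sum_(j < B) \sum_(t : 'S_(h' + k))
  ((-1) ^+ odd_perm t / (h'`!%:R * k`!%:R)) *:
  mulM (mulM (p.2 'X^j) (al (cons_arg p.1 [ffun q => b (t (lshift k q))]))@_(cons_exp j
          [ffun q => d (t (lshift k q))]))
       (be [ffun q => b (t (rshift h' q))])@_[ffun q => d (t (rshift h' q))]).
  apply: eq_bigr => p _; apply: eq_bigr => j _.
  under eq_bigl do rewrite eqb_id.
  rewrite -cons_arg_nth -cons_exp_nth.
  rewrite sum_wedge_term_left // mulM_sumr; apply: eq_bigr => t _.
  by rewrite mulMZr mulMA.
under eq_bigr do rewrite exchange_big.
rewrite exchange_big; apply: eq_bigr => t _; rewrite /wedge_term /= (mcoeff_iotaS (B := B)); last first.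
  by move=> y /xiL yL j Bj; rewrite (deg_bounded_cons _ alB) // => q; rewrite !ffunE.
rewrite mulM_suml scaler_sumr; apply: eq_bigr => p _.
by rewrite mulM_suml scaler_sumr.
Qed.

Lemma contr_wedge_right h k (al : cochain A M h) (be : cochain A M k) (xi : gamma1_rep A M)
    a e L B :
  is_cochain dA be -> deg_bounded be L B -> (forall q, nth 0 a q \in L) ->
  {subset [seq p.1 | p <- xi] <= L} ->
  \sum_(p <- xi) \sum_(j < B) mulM (p.2 'X^j) (wedge_part false al be (p.1 :: a) ((j : nat) :: e)) =
  (-1) ^+ h *: gcomp (wedge mulM al (contr mulM xi be)) a e.
Proof.
case: k be => [|k'] be be_cochain beB aL xiL.
  rewrite gcomp_wedge0r // scaler0 big1 // => p _; rewrite big1 // => j _.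
  rewrite /wedge_part; case: ifP => [/andP[/eqP sa _]|_]; last by rewrite mulM0r.
  have lt0 : (0 < h + 0)%N by rewrite -sa.
  rewrite big_pred0 ?mulM0r // => s.
  rewrite (first_slot_leftE _ (erefl : val (Ordinal lt0) = 0%N)).
  by rewrite (leq_trans (ltn_ord _)) ?addn0.
have sizesS : ((size a).+1 == h + k'.+1)%N && ((size e).+1 == h + k'.+1)%N =
              (size a == h + k')%N && (size e == h + k')%N by rewrite addnS !eqSS.
rewrite /wedge_part /gcomp /= sizesS; case: ifP => sizes; last first.
  by rewrite scaler0 big1 // => p _; rewrite big1 // => j _; rewrite mulM0r.
set b := [ffun i : 'I_(h + k') => nth 0 a i]; set d := [ffun i : 'I_(h + k') => nth 0%N e i].
rewrite mcoeff_wedge scaler_sumr; transitivity (\sum_(p <- xi) \sum_(j < B) \sum_(t : 'S_(h + k'))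
  (-1) ^+ h *: (((-1) ^+ odd_perm t / (h`!%:R * k'`!%:R)) *:
  mulM (al [ffun q => b (t (lshift k' q))])@_[ffun q => d (t (lshift k' q))]
       (mulM (p.2 'X^j) (be (cons_arg p.1 [ffun q => b (t (rshift h q))]))@_(cons_exp j
          [ffun q => d (t (rshift h q))])))).
  apply: eq_bigr => p _; apply: eq_bigr => j _.
  under eq_bigl do rewrite eqbF_neg.
  have -> : [ffun i : 'I_(h + k'.+1) => nth 0 (p.1 :: a) i] =
            [ffun q => cons_arg p.1 b (cast_ord (addnS h k') q)].
    by apply/ffunP => q; rewrite /b cons_arg_nth !ffunE.
  have -> : [ffun i : 'I_(h + k'.+1) => nth 0%N ((j : nat) :: e) i] =
            [ffun q => cons_exp j d (cast_ord (addnS h k') q)].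
    by apply/ffunP => q; rewrite /d cons_exp_nth !ffunE.
  rewrite sum_wedge_term_right // mulMZr mulM_sumr scaler_sumr; apply: eq_bigr => t _.
  by rewrite !mulMZr mulMA (mulMC (p.2 _)) -mulMA.
under eq_bigr do rewrite exchange_big.
rewrite exchange_big; apply: eq_bigr => t _; rewrite /wedge_term /= (mcoeff_iotaS (B := B)).
  rewrite mulM_sumr !scaler_sumr; apply: eq_bigr => p _.
  by rewrite mulM_sumr !scaler_sumr.
by move=> y /xiL yL j Bj; rewrite (deg_bounded_cons _ beB) // => q; rewrite !ffunE.
Qed.

End Contraction.

Unset Implicit Arguments.
Set Strict Implicit.

Theorem proposition3p25 (F : fieldType) (A M : lmodType F)
  (dA : {linear A -> A}) (br : A -> A -> {malg A[nat]})
  (dM : {linear M -> M}) (act : A -> M -> {malg M[nat]}) (mulM : M -> M -> M) :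
  [pchar F] =i pred0 ->
  is_LCA dA br ->
  is_LCA_module dA br dM act ->
  is_deriv_product dM act mulM ->
  forall (xi : gamma1_rep A M) (h k : nat)
         (al : cochain A M h) (be : cochain A M k),
  is_cochain dA al -> is_cochain dA be ->
  forall (a : seq A) (e : seq nat),
    gcomp (contr mulM xi (wedge mulM al be)) a e =
    gcomp (wedge mulM (contr mulM xi al) be) a e
    + (-1) ^+ h *: gcomp (wedge mulM al (contr mulM xi be)) a e.
Proof.
move=> char0 _ _ [[mulMl mulMr] [mulMA mulMC _ _]] xi h k al be al_cochain be_cochain a e.
pose L := 0 :: [seq p.1 | p <- xi] ++ a.
have aL q : nth 0 a q \in L.
  rewrite !inE mem_cat; case: (ltnP q (size a)) => [lt_qa | le_aq].
    by rewrite mem_nth ?orbT.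
  by rewrite nth_default ?eqxx.
have xiL : {subset [seq p.1 | p <- xi] <= L} by move=> x xi_x; rewrite !inE mem_cat xi_x orbT.
have [Ba alB] := deg_bounded_exists al L; have [Bb beB] := deg_bounded_exists be L.
have {}alB := deg_bounded_le (leq_maxl Ba Bb) alB.
have {}beB := deg_bounded_le (leq_maxr Ba Bb) beB.
rewrite (gcomp_contr mulMr (B := maxn Ba Bb)) => [|x /xiL xL j Bj]; last first.
  exact: gcomp_cons_eq0 (deg_bounded_wedge mulMl mulMr alB beB) xL aL Bj.
under eq_bigr do under eq_bigr do rewrite (gcomp_wedge_split mulMl mulMr) (mulMDr mulMr).
under eq_bigr do rewrite big_split.
rewrite big_split (contr_wedge_left mulMl mulMr mulMA char0 be e al_cochain alB aL xiL).
by rewrite (contr_wedge_right mulMl mulMr mulMA mulMC char0 al e be_cochain beB aL xiL).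
Qed.
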